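(* Let $S=\langle T,\Pi,C\rangle$ be a state space and let $(A_i,\psi_i)$, $1\le i\le k$, be abstractions of $S$ forming an additive abstraction system. Let $t,g\in T$ and let $\pi$ be a path from $t$ to $g$ in $S$ with $C(\pi)=\sum_{i=1}^k C^*_i(t_i,g_i)$. Then $R_i(\pi_i)\ge R^*_i(t_i,g_i)$ for all $i\in\{1,\dots,k\}$.
   Context: A state space is a weighted directed graph $S=\langle T,\Pi,C\rangle$ where $T$ is a finite set of states, $\Pi\subseteq T\times T$ is a set of directed edges, and $C:\Pi\to\mathbb{N}=\{0,1,2,\dots\}$. A path from $u$ to $v$ is a sequence of edges $\langle\pi^1,\dots,\pi^n\rangle$ with $\pi^j=(u^{j-1},u^j)\in\Pi$, $u^0=u$, $u^n=v$; its cost is $C(\pi)=\sum_j C(\pi^j)$. An abstract state space is $A_i=\langle T_i,\Pi_i,C_i,R_i\rangle$ with $T_i$ a set of abstract states, $\Pi_i\subseteq T_i\times T_i$, and edge weights $C_i,R_i:\Pi_i\to\mathbb{N}$ (primary and residual cost), extended additively to paths. An abstraction of $S$ is a pair $(A_i,\psi_i)$ with $\psi_i:T\to T_i$ such that (1) for every $(u,v)\in\Pi$, $(\psi_i(u),\psi_i(v))\in\Pi_i$, and (2) for every $\pi=(u,v)\in\Pi$, $C_i(\pi_i)+R_i(\pi_i)\le C(\pi)$ where $\pi_i=(\psi_i(u),\psi_i(v))$. The system is additive if for every $\pi\in\Pi$, $\sum_{i=1}^k C_i(\pi_i)\le C(\pi)$. Write $t_i=\psi_i(t)$, and for a path $\pi=\langle\pi^1,\dots,\pi^n\rangle$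 in $S$ let $\pi_i=\langle\pi^1_i,\dots,\pi^n_i\rangle$ be its edgewise image, a path in $A_i$. Define $C^*_i(x,y)=\min\{C_i(\rho):\rho\text{ a path from }x\text{ to }y\text{ in }A_i\}$; $P_i(x,y)$ is the set of paths $\rho$ from $x$ to $y$ in $A_i$ with $C_i(\rho)=C^*_i(x,y)$, and $R^*_i(x,y)=\min_{\rho\in P_i(x,y)}R_i(\rho)$. *)

From mathcomp Require Import all_boot.
From Stdlib Require Import ClassicalEpsilon.
Set Implicit Arguments. Unset Strict Implicit. Unset Printing Implicit Defensive.

(* A path starting at u is represented by the list p of states it visits after u:
   the edges are (u,p_1), (p_1,p_2), ...; it ends at [last u p].
   The empty list is the empty path from u to u. *)
Fixpoint is_path (V : Type) (E : V -> V -> Prop) (u : V) (p : seq V) : Prop :=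
  match p with
  | [::] => True
  | v :: p' => E u v /\ is_path E v p'
  end.

Fixpoint pcost (V : Type) (w : V -> V -> nat) (u : V) (p : seq V) : nat :=
  match p with
  | [::] => 0
  | v :: p' => w u v + pcost w v p'
  end.

Definition path_from_to (V : Type) (E : V -> V -> Prop) (x y : V) (p : seq V) :=
  is_path E x p /\ last x p = y.

Definition is_min_over (V : Type) (E : V -> V -> Prop) (x y : V)
    (Q : seq V -> Prop) (f : seq V -> nat) (m : nat) : Prop :=
  (exists p, path_from_to E x y p /\ Q p /\ f p = m) /\
  (forall p, path_from_to E x y p -> Q p -> m <= f p).

Definition Cstar (V : Type) (E : V -> V -> Prop) (c : V -> V -> nat) (x y : V) : nat :=
  epsilon (inhabits 0%N) (is_min_over E x y (fun _ => True) (pcost c x)).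

Definition Rstar (V : Type) (E : V -> V -> Prop) (c r : V -> V -> nat) (x y : V) : nat :=
  epsilon (inhabits 0%N)
    (is_min_over E x y (fun p => pcost c x p = Cstar E c x y) (pcost r x)).

From Stdlib Require Import ClassicalEpsilon Classical Wf_nat.
From mathcomp Require Import all_boot.

Set Implicit Arguments.
Unset Strict Implicit.
Unset Printing Implicit Defensive.

(* Each image pi_i is a path from t_i to g_i, so C_i(pi_i) >= C*_i(t_i, g_i).
   Additivity gives sum_i C_i(pi_i) <= C(pi) = sum_i C*_i(t_i, g_i), so all
   these inequalities are equalities: pi_i lies in P_i(t_i, g_i), and its
   residual cost is therefore at least the minimum R*_i(t_i, g_i). *)

Lemma exists_least_nat (P : nat -> Prop) :
  (exists n, P n) -> exists2 m, P m & forall n, P n -> m <= n.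
Proof.
move=> exP.
have [m [[Pm m_least] _]] :=
  dec_inh_nat_subset_has_unique_least_element P (fun n => classic (P n)) exP.
by exists m => // n /m_least/leP.
Qed.

Section MinimalPaths.

Variables (V : Type) (E : V -> V -> Prop) (x y : V).

Lemma is_min_over_epsilon (Q : seq V -> Prop) (f : seq V -> nat) (p : seq V) :
  path_from_to E x y p -> Q p ->
  is_min_over E x y Q f (epsilon (inhabits 0) (is_min_over E x y Q f)).
Proof.
move=> pxy Qp; apply: epsilon_spec.
have [m [q [qxy [Qq <-]]] m_least] :=
  @exists_least_nat (fun m => exists q, path_from_to E x y q /\ Q q /\ f q = m)
    (ex_intro _ _ (ex_intro _ p (conj pxy (conj Qp erefl)))).
by exists (f q); split=> [|q' q'xy Qq']; [exists q | apply: m_least; exists q'].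
Qed.

Lemma epsilon_min_le (Q : seq V -> Prop) (f : seq V -> nat) (p : seq V) :
  path_from_to E x y p -> Q p ->
  epsilon (inhabits 0) (is_min_over E x y Q f) <= f p.
Proof. by move=> pxy Qp; have [_] := is_min_over_epsilon f pxy Qp; apply. Qed.

Lemma Cstar_le (c : V -> V -> nat) (p : seq V) :
  path_from_to E x y p -> Cstar E c x y <= pcost c x p.
Proof. by move=> pxy; apply: epsilon_min_le. Qed.

Lemma Rstar_le (c r : V -> V -> nat) (p : seq V) :
  path_from_to E x y p -> pcost c x p = Cstar E c x y ->
  Rstar E c r x y <= pcost r x p.
Proof. exact: epsilon_min_le. Qed.

End MinimalPaths.

Lemma is_path_map (T V : Type) (E : T -> T -> Prop) (F : V -> V -> Prop)
    (h : T -> V) (u : T) (p : seq T) :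
  (forall u v, E u v -> F (h u) (h v)) ->
  is_path E u p -> is_path F (h u) (map h p).
Proof. by move=> hEF; elim: p u => [|v p IHp] u //= [/hEF Fuv /IHp]. Qed.

Lemma path_from_to_map (T V : Type) (E : T -> T -> Prop) (F : V -> V -> Prop)
    (h : T -> V) (x y : T) (p : seq T) :
  (forall u v, E u v -> F (h u) (h v)) ->
  path_from_to E x y p -> path_from_to F (h x) (h y) (map h p).
Proof.
by move=> hEF [pxy <-]; split; [exact: is_path_map pxy | rewrite last_map].
Qed.

Lemma sum_pcost_map_le (T : Type) (E : T -> T -> Prop) (c : T -> T -> nat)
    (k : nat) (Ti : 'I_k -> Type) (ci : forall i, Ti i -> Ti i -> nat)
    (psi : forall i, T -> Ti i) (u : T) (p : seq T) :
  (forall u v, E u v -> \sum_(i < k) ci i (psi i u) (psi i v) <= c u v) ->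
  is_path E u p ->
  \sum_(i < k) pcost (ci i) (psi i u) (map (psi i) p) <= pcost c u p.
Proof.
move=> cadd; elim: p u => [|v p IHp] u /=; first by rewrite big1.
by case=> Euv /IHp; rewrite big_split /=; apply: leq_add; apply: cadd.
Qed.

Lemma leq_sum_eq (I : finType) (a b : I -> nat) (i : I) :
  (forall j, a j <= b j) -> \sum_j b j <= \sum_j a j -> a i = b i.
Proof.
move=> le_ab le_sum.
have sum_ab : \sum_j a j == \sum_j b j by rewrite eqn_leq le_sum leq_sum.
have [_] := leqif_sum (P := predT) (fun j _ => leqif_eq (le_ab j)).
by rewrite sum_ab => /esym/forall_inP/(_ i isT)/eqP.
Qed.

Theorem lemma8
  (T : finType) (Pi : T -> T -> Prop) (C : T -> T -> nat)
  (k : nat) (Ti : 'I_k -> Type)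
  (Pii : forall i, Ti i -> Ti i -> Prop)
  (Ci Ri : forall i, Ti i -> Ti i -> nat)
  (psi : forall i, T -> Ti i)
  (Habs1 : forall i u v, Pi u v -> Pii i (psi i u) (psi i v))
  (Habs2 : forall i u v, Pi u v ->
     Ci i (psi i u) (psi i v) + Ri i (psi i u) (psi i v) <= C u v)
  (Hadd : forall u v, Pi u v -> \sum_(i < k) Ci i (psi i u) (psi i v) <= C u v)
  (t g : T) (p : seq T)
  (Hp : path_from_to Pi t g p)
  (Hcost : pcost C t p = \sum_(i < k) Cstar (Pii i) (Ci i) (psi i t) (psi i g)) :
  forall i : 'I_k,
    Rstar (Pii i) (Ci i) (Ri i) (psi i t) (psi i g)
      <= pcost (Ri i) (psi i t) (map (psi i) p).
Proof.
move=> i.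
have p_abs j : path_from_to (Pii j) (psi j t) (psi j g) (map (psi j) p).
  exact: path_from_to_map (Habs1 j) Hp.
apply: Rstar_le; first exact: p_abs.
pose Cmin j := Cstar (Pii j) (Ci j) (psi j t) (psi j g).
pose Cabs j := pcost (Ci j) (psi j t) (map (psi j) p).
apply/esym/(@leq_sum_eq _ Cmin Cabs) => [j|]; first exact: Cstar_le.
by rewrite -Hcost; apply: sum_pcost_map_le Hadd _; case: Hp.
Qed.
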